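(* There is a deterministic distributed dynamic data structure for robust $3$-hop neighborhood listing which handles edge insertions and deletions in $O(1)$ amortized rounds.
   Context: Highly dynamic network model: a synchronous network on a fixed set $V$ of $n$ nodes with unique identifiers starts as the empty graph; at the beginning of round $i$ the graph is $G_i=(V,E_i)$, obtained from the previous graph by an adversary inserting and/or deleting an arbitrary (unbounded) set of edges. At the start of each round every node is notified only of the insertions/deletions of edges incident to it; then each node may send a message of $O(\log n)$ bits to each of its current neighbors. A distributed dynamic data structure consists of a local part $DS_v$ at each node $v$; at the end of every round, $DS_v$ may be queried and must answer immediately, without any further communication. The amortized round complexity is at most $c$ if for every round $i$, the number of rounds up to round $i$ in which at least one node $v$ has $DS_v$ in an inconsistent state, divided by the total number of topology changes that occurred up to round $i$, is at most $c$. For an edge $e$, its insertion time $t_e$ is the latest round in which $e$ was inserted. Let $E^{v,3}_i$ be the set of edges of $G_i$ having an endpoint at distance at most $2$ from $v$. The robust $3$-hop neighborhood $R^{v,3}_i\subseteq E^{v,3}_i$ consists of: all edges of $G_i$ incident to $v$; the edges of every path $v-u-w$ in $G_i$ with $t_{\{u,w\}}\geq t_{\{v,u\}}$; and the edges of every path $v-u-w-x$ in $G_i$ with $t_{\{w,x\}}\geq t_{\{u,w\}}$ and $t_{\{w,x\}}\geq t_{\{v,u\}}$. Robust $3$-hop neighborhood listing: in round $i$, $DS_v$ must respond to a query $\{u,w\}$ with $\texttt{true}$ if $\{u,w\}\in R^{v,3}_{i-1}$, with $\texttt{false}$ if $\{u,w\}\notin E^{v,3}_{i-1}$, or with $\texttt{inconsistent}$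 if $DS_v$ is in an inconsistent state. *)

From mathcomp Require Import all_boot.

Set Implicit Arguments.
Unset Strict Implicit.
Unset Printing Implicit Defensive.

(* Node set V = 'I_n (node identifiers are the indices themselves).
   A dynamic graph: G i u w = "edge {u,w} is present in G_i".           *)
Definition dgraph (n : nat) := nat -> 'I_n -> 'I_n -> bool.

(* G_0 is empty; every G_i is a simple undirected graph; the adversary
   may change arbitrarily many edges between consecutive rounds.        *)
Definition valid_dgraph (n : nat) (G : dgraph n) : Prop :=
  (forall u w, G 0 u w = false) /\
  (forall i u w, G i u w = G i w u) /\
  (forall i u, G i u u = false).

Definition ins_time (n : nat) (G : dgraph n) (i : nat) (u w : 'I_n) : nat :=
  \max_(j < i.+1 | G j u w && ~~ G j.-1 u w) (j : nat).

Definition pair_eq (n : nat) (a b u w : 'I_n) : bool :=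
  ((a == u) && (b == w)) || ((a == w) && (b == u)).

(* {a,b} in E^{v,3}_i : edge of G_i with an endpoint at distance <= 2 from v *)
Definition in_E3 (n : nat) (G : dgraph n) (i : nat) (v a b : 'I_n) : bool :=
  G i a b &&
  [exists x : 'I_n, ((x == a) || (x == b)) &&
     [|| x == v, G i v x | [exists y : 'I_n, G i v y && G i y x]]].

(* {a,b} in R^{v,3}_i : the robust 3-hop neighborhood *)
Definition in_R3 (n : nat) (G : dgraph n) (i : nat) (v a b : 'I_n) : bool :=
  let t := ins_time G i in
  G i a b &&
  [|| (a == v) || (b == v),
      [exists u : 'I_n, exists w : 'I_n,
         [&& G i v u, G i u w, pair_eq a b u w & t v u <= t u w]]
    | [exists u : 'I_n, exists w : 'I_n, exists x : 'I_n,
         [&& G i v u, G i u w, G i w x, pair_eq a b w x,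
             t u w <= t w x & t v u <= t w x]]].

Definition num_changes (n : nat) (G : dgraph n) (j : nat) : nat :=
  #|[set p : 'I_n * 'I_n | (p.1 < p.2)%N && (G j p.1 p.2 != G j.-1 p.1 p.2)]|.

Definition total_changes (n : nat) (G : dgraph n) (i : nat) : nat :=
  \sum_(1 <= j < i.+1) num_changes G j.

(* Round i: each node v is notified of the inserted and deleted incident
   edges (as sets of neighbours), then sends a message (bit string) to
   each current neighbour, then updates its state with the received
   messages (labelled by sender).  At the end of the round the local part
   DS_v is queried through [doutput]: None = inconsistent state,
   Some f = consistent, answering query {a,b} with f a b.               *)
Record dds_alg (n : nat) := DDSAlg {
  dstate : Type;
  dinit : 'I_n -> dstate;
  dnotify : 'I_n -> dstate -> {set 'I_n} -> {set 'I_n} -> dstate;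
  dsend : 'I_n -> dstate -> 'I_n -> bitseq;
  drecv : 'I_n -> dstate -> ('I_n -> option bitseq) -> dstate;
  doutput : 'I_n -> dstate -> option ('I_n -> 'I_n -> bool) }.

Definition mid_of (n : nat) (A : dds_alg n) (G : dgraph n) (i : nat)
    (prev : 'I_n -> dstate A) (v : 'I_n) : dstate A :=
  @dnotify n A v (prev v) [set u | G i v u && ~~ G i.-1 v u]
                       [set u | ~~ G i v u && G i.-1 v u].

Definition step (n : nat) (A : dds_alg n) (G : dgraph n) (i : nat)
    (prev : 'I_n -> dstate A) (v : 'I_n) : dstate A :=
  @drecv n A v (@mid_of n A G i prev v)
    (fun u => if G i u v then Some (@dsend n A u (@mid_of n A G i prev u) v) else None).

Fixpoint exec (n : nat) (A : dds_alg n) (G : dgraph n) (i : nat) : 'I_n -> dstate A :=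
  match i with
  | 0 => @dinit n A
  | i'.+1 => @step n A G i'.+1 (@exec n A G i')
  end.

Definition msg_bounded (n : nat) (A : dds_alg n) (G : dgraph n) (C : nat) : Prop :=
  forall i (u v : 'I_n), G i.+1 u v ->
    (size (@dsend n A u (@mid_of n A G i.+1 (@exec n A G i) u) v) <= C * (trunc_log 2 n).+1)%N.

(* query semantics: in round i (>= 1) a consistent DS_v answers true on
   R^{v,3}_{i-1} and false outside E^{v,3}_{i-1} *)
Definition answers_correct (n : nat) (A : dds_alg n) (G : dgraph n) : Prop :=
  forall i (v : 'I_n) f, @doutput n A v (@exec n A G i.+1 v) = Some f ->
    forall a b : 'I_n, (in_R3 G i v a b -> f a b) /\ (~~ in_E3 G i v a b -> ~~ f a b).

Definition inconsistent_at (n : nat) (A : dds_alg n) (G : dgraph n) (i : nat) : bool :=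
  [exists v : 'I_n, ~~ isSome (@doutput n A v (@exec n A G i v))].

Definition inconsistent_rounds (n : nat) (A : dds_alg n) (G : dgraph n) (i : nat) : nat :=
  \sum_(1 <= j < i.+1) (inconsistent_at A G j : nat).

(** Every node queues the changes of its incident edges and broadcasts one
   queued change per round; every node also queues, and forwards one per round,
   the changes it hears from its neighbours, so that a change of an edge at
   distance two from [v] reaches [v] through two queues.  A node [v] caches what
   it heard about edges {u,w} and {w,x} along paths v-u-w-x; its view of such an
   edge is the cached value overridden by the changes still queued on the way.
   By induction over the rounds, this view never claims a non-edge, and it is
   correct for every edge inserted no earlier than the edges of the path that
   leads to it: this is exactly robustness.  A node declares itself consistent
   when neither it nor its neighbours saw a change in the current round and all
   queues on the way to it are drained, so that its cache equals its view.

   For the amortized bound, a change adds two entries to the event queues and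
   at most two to each relay queue, so the potential
   [2 * sum of event queue lengths + max relay queue length] grows by at most
   6 per change, while it drops in every round in which some queue holds two
   entries.  An inconsistent round has a change or such a backlog in it or in
   the previous round, which gives at most 1 + 2 * 6 = 13 inconsistent rounds
   per change. *)

From Pilot Require Import Defs.
From mathcomp Require Import all_boot zify.

Set Implicit Arguments.
Unset Strict Implicit.
Unset Printing Implicit Defensive.

Lemma odflt_orelse (R : Type) (d : R) (o1 o2 : option R) :
  odflt d (if o1 is Some r then Some r else o2) = odflt (odflt d o2) o1.
Proof. by case: o1. Qed.

Section LatestEntry.
Variables (T R : Type) (h : T -> option R).

Definition latest (s : seq T) : option R := ohead (rev (pmap h s)).

Lemma latest_cat s1 s2 :
  latest (s1 ++ s2) = if latest s2 is Some r then Some r else latest s1.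
Proof. by rewrite /latest pmap_cat rev_cat; case: (rev (pmap h s2)). Qed.

Lemma latest_cons t s : latest (t :: s) = if latest s is Some r then Some r else h t.
Proof. by rewrite -cat1s latest_cat /latest /=; case: (h t). Qed.

Lemma latest_behead s :
  latest s = if latest (behead s) is Some r then Some r else obind h (ohead s).
Proof. by case: s => [|t s] //=; rewrite latest_cons. Qed.

Lemma latest_behead_Some s r : latest (behead s) = Some r -> latest s = Some r.
Proof. by rewrite (latest_behead s) => ->. Qed.

Lemma odflt_latest_behead (d : R) s :
  odflt (odflt d (obind h (ohead s))) (latest (behead s)) = odflt d (latest s).
Proof. by rewrite (latest_behead s); case: (latest (behead s)). Qed.

Lemma latest_small s : size s <= 1 -> latest s = obind h (ohead s).
Proof. by case: s => [|t [|]] //= _; rewrite latest_cons. Qed.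

End LatestEntry.

Lemma latest_pmap (A T R : Type) (h : T -> option R) (F : A -> option T) s :
  latest h (pmap F s) = latest (fun a => obind h (F a)) s.
Proof.
rewrite /latest; congr (ohead (rev _)).
by elim: s => [|a s IH] //=; case: (F a) => /= [t|]; rewrite IH.
Qed.

Lemma latest_map (A T R : Type) (h : T -> option R) (f : A -> T) s :
  latest h (map f s) = latest (fun a => h (f a)) s.
Proof. by rewrite /latest; congr (ohead (rev _)); elim: s => //= a s ->. Qed.

Lemma latest_single (T : eqType) (R : Type) (g : T -> option R) (a : T) s :
  (forall y, y != a -> g y = None) -> latest g s = if a \in s then g a else None.
Proof.
move=> g0; elim: s => [|y s IH] //=; rewrite latest_cons IH in_cons eq_sym.
by case: eqVneq => [->|/g0 ->]; case: (a \in s); case: (g a).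
Qed.

Fixpoint bits_of_nat (k x : nat) : bitseq :=
  if k is k'.+1 then odd x :: bits_of_nat k' x./2 else [::].

Fixpoint nat_of_bits (s : bitseq) : nat :=
  if s is b :: s' then b + (nat_of_bits s').*2 else 0.

Lemma size_bits_of_nat k x : size (bits_of_nat k x) = k.
Proof. by elim: k x => [|k IH] x //=; rewrite IH. Qed.

Lemma bits_of_natK k x : x < 2 ^ k -> nat_of_bits (bits_of_nat k x) = x.
Proof.
elim: k x => [|k IH] x /=; first by case: x.
by move=> ltx; rewrite IH ?odd_double_half // ltn_half_double -muln2 -expnSr.
Qed.

Section FiniteCode.
Variables (T : finType) (k : nat).

Definition encode (x : T) : bitseq := bits_of_nat k (enum_rank x).

Definition decode (s : bitseq) : option T :=
  omap enum_val (insub (nat_of_bits s) : option 'I_#|T|).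

Lemma size_encode x : size (encode x) = k.
Proof. exact: size_bits_of_nat. Qed.

Lemma encodeK : #|T| <= 2 ^ k -> pcancel encode decode.
Proof.
move=> cardT x; rewrite /decode /encode bits_of_natK ?valK /= ?enum_rankK //.
exact: leq_trans (ltn_ord _) cardT.
Qed.

End FiniteCode.

Lemma card_set_sum (T : finType) (P : pred T) : #|[set x | P x]| = \sum_x P x.
Proof. by rewrite -sum1dep_card big_mkcond; apply: eq_bigr => x _; case: (P x). Qed.

Lemma handshake n (r : rel 'I_n) : symmetric r -> irreflexive r ->
  \sum_v #|[set x | r v x]| = 2 * #|[set p : 'I_n * 'I_n | (p.1 < p.2) && r p.1 p.2]|.
Proof.
move=> r_sym r_irr; have split_v v :
    #|[set x | r v x]| =
    \sum_(x : 'I_n) ((v < x) && r v x) + \sum_(x : 'I_n) ((x < v) && r v x).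
  rewrite card_set_sum -big_split; apply: eq_bigr => x _ /=.
  by case: ltngtP => [||/val_inj <-]; rewrite ?r_irr ?andbF ?addn0.
rewrite (eq_bigr _ (fun v _ => split_v v)) big_split /= [X in _ + X]exchange_big /=.
under [X in _ + X]eq_bigr => v _ do under eq_bigr => x _ do rewrite r_sym.
by rewrite addnn -mul2n card_set_sum pair_bigA.
Qed.

Section Algorithm.
Variable n : nat.

(* An event [(x, b)] of node [v]: the edge {v,x} was inserted ([b]) or deleted.
   A relay [(w, Some e)] queued at [u] forwards the event [e] of its neighbour
   [w]; [(w, None)] tells the neighbours of [u] that {u,w} was deleted, so that
   they forget every edge they learnt of through [w]. *)
Definition event := ('I_n * bool)%type.
Definition relay := ('I_n * option event)%type.
Definition msg := (option event * option relay * bool * bool)%type.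

Definition msg_event (m : msg) : option event := m.1.1.1.
Definition msg_relay (m : msg) : option relay := m.1.1.2.
Definition msg_flushed (m : msg) : bool := m.1.2.
Definition msg_calm (m : msg) : bool := m.2.

Definition msg_bits := 7 * (trunc_log 2 n).+1.

Lemma card_msg : #|{: msg}| <= 2 ^ msg_bits.
Proof.
have ltnN : n < 2 ^ (trunc_log 2 n).+1 by apply: trunc_log_ltn.
rewrite !(card_prod, card_option, card_ord, card_bool) /msg_bits [7 * _]mulnC expnM.
set N := 2 ^ (trunc_log 2 n).+1 in ltnN *.
have N2 : 2 <= N by rewrite /N expnS leq_pmulr ?expn_gt0.
have le16 : 16 <= N ^ 4 by rewrite (@leq_exp2r 2 N 4).
have : (n * 2).+1 * (n * (n * 2).+1).+1 <= (2 * N) * (2 * N ^ 2) by apply: leq_mul; nia.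
rewrite (_ : 7 = 3 + 4) // expnD [N ^ 3]expnS => le_prod.
by have := leq_mul le16 (leqnn (N * N ^ 2)); nia.
Qed.

Definition event_on (x : 'I_n) (e : event) : option bool :=
  if e.1 == x then Some e.2 else None.

Definition relay_on (w x : 'I_n) (r : relay) : option bool :=
  if r.1 == w then (if r.2 is Some e then event_on x e else Some false) else None.

(* [known2 u w] caches what was heard from the neighbour [u] about {u,w}, and
   [known3 u w x] what [u] relayed about {w,x}; [nbrs_flushed] records that in
   the previous round every neighbour had at most one queued event, so that
   none has any left. *)
Record node_state := NodeState {
  nbr : 'I_n -> bool;
  events : seq event;
  relays : seq relay;
  known2 : 'I_n -> 'I_n -> bool;
  known3 : 'I_n -> 'I_n -> 'I_n -> bool;
  changed : bool;
  nbrs_flushed : bool;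
  consistent : bool }.

Definition init_state (v : 'I_n) : node_state :=
  NodeState (fun _ => false) [::] [::] (fun _ _ => false) (fun _ _ _ => false)
    false true false.

Definition notify (v : 'I_n) (s : node_state) (ins del : {set 'I_n}) : node_state :=
  NodeState (fun x => if x \in ins then true else if x \in del then false else nbr s x)
    (events s ++ [seq (x, x \in ins) | x <- enum (ins :|: del)])
    (relays s ++ [seq (x, None) | x <- enum del])
    (fun u => if u \in ins then fun _ => false else known2 s u)
    (fun u => if u \in ins then fun _ _ => false else known3 s u)
    (ins :|: del != set0) (nbrs_flushed s) (consistent s).

Definition calm (s : node_state) : bool :=
  [&& ~~ changed s, size (events s) <= 1, size (relays s) <= 1 & nbrs_flushed s].

Definition message (s : node_state) : msg :=
  (ohead (events s), ohead (relays s), size (events s) <= 1, calm s).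

Definition send (u : 'I_n) (s : node_state) (v : 'I_n) : bitseq :=
  encode msg_bits (message s).

Lemma decode_send u s v : decode msg (send u s v) = Some (message s).
Proof. exact/encodeK/card_msg. Qed.

Definition relayed (md : 'I_n -> option msg) (u : 'I_n) : option relay :=
  if md u is Some m then omap (fun e => (u, Some e)) (msg_event m) else None.

Definition receive (v : 'I_n) (s : node_state) (m : 'I_n -> option bitseq) : node_state :=
  let md u := obind (decode msg) (m u) in
  NodeState (nbr s) (behead (events s))
    (behead (relays s) ++ pmap (relayed md) (enum 'I_n))
    (fun u w => if md u is Some mu then
                  odflt (known2 s u w) (obind (event_on w) (msg_event mu))
                else known2 s u w)
    (fun u w x => if md u is Some mu then
                    odflt (known3 s u w x) (obind (relay_on w x) (msg_relay mu))
                  else known3 s u w x)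
    (changed s)
    [forall u, if md u is Some mu then msg_flushed mu else true]
    (~~ changed s && [forall u, if md u is Some mu then msg_calm mu else true]).

Definition answer (v : 'I_n) (s : node_state) (a b : 'I_n) : bool :=
  [|| (a == v) && nbr s b, (b == v) && nbr s a,
      [exists u, nbr s u && (((a == u) && known2 s u b) || ((b == u) && known2 s u a))]
    | [exists u, nbr s u && (known3 s u a b || known3 s u b a)]].

Definition output (v : 'I_n) (s : node_state) : option ('I_n -> 'I_n -> bool) :=
  if consistent s then Some (answer v s) else None.

Definition listing_alg : dds_alg n :=
  DDSAlg init_state notify send receive output.

End Algorithm.

Section Execution.
Variables (n : nat) (G : dgraph n).
Hypothesis HG : valid_dgraph G.

Lemma G_sym i u w : G i u w = G i w u.
Proof. by case: HG => _ []. Qed.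

Definition state (i : nat) : 'I_n -> node_state n := exec (listing_alg n) G i.

Definition notified (i : nat) (v : 'I_n) : node_state n :=
  @mid_of n (listing_alg n) G i (state i.-1) v.

Definition toggled (i : nat) (v : 'I_n) : {set 'I_n} := [set x | G i v x != G i.-1 v x].

Lemma notifiedE i v : notified i v = notify v (state i.-1 v)
  [set u | G i v u && ~~ G i.-1 v u] [set u | ~~ G i v u && G i.-1 v u].
Proof. by []. Qed.

Lemma state_succ i v : state i.+1 v = receive v (notified i.+1 v)
  (fun u => if G i.+1 u v then Some (send u (notified i.+1 u) v) else None).
Proof. by []. Qed.

Lemma state0 v : state 0 v = init_state v.
Proof. by []. Qed.

Lemma events_state i v : events (state i.+1 v) = behead (events (notified i.+1 v)).
Proof. by []. Qed.

(* From now on rounds are only unfolded through the lemmas above; otherwise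
   [/=] would expand the whole execution. *)
#[global] Opaque notified state.

Lemma ins_del_toggled i v :
  [set u | G i v u && ~~ G i.-1 v u] :|: [set u | ~~ G i v u && G i.-1 v u] = toggled i v.
Proof. by apply/setP => x; rewrite !inE; case: (G i v x); case: (G i.-1 v x). Qed.

Lemma nbr_state i v x : nbr (state i v) x = G i v x.
Proof.
elim: i v x => [|i IH] v x; first by case: HG => ->.
by rewrite state_succ /= notifiedE /= !inE IH; case: (G i.+1 v x); case: (G i v x).
Qed.

Lemma size_events_notified i v :
  size (events (notified i v)) = size (events (state i.-1 v)) + #|toggled i v|.
Proof. by rewrite notifiedE /= size_cat size_map -cardE ins_del_toggled. Qed.

Lemma size_relays_notified i v :
  size (relays (notified i v)) <= size (relays (state i.-1 v)) + #|toggled i v|.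
Proof.
rewrite notifiedE /= size_cat size_map -cardE leq_add2l -ins_del_toggled.
exact/subset_leq_card/subsetUr.
Qed.

Lemma changed_notified i v : changed (notified i v) = (toggled i v != set0).
Proof. by rewrite notifiedE /= ins_del_toggled. Qed.

Lemma latest_events_notified i v x :
  latest (event_on x) (events (notified i.+1 v)) =
  if G i.+1 v x != G i v x then Some (G i.+1 v x)
  else latest (event_on x) (events (state i v)).
Proof.
rewrite notifiedE /= latest_cat latest_map ins_del_toggled.
rewrite (@latest_single _ _ _ x) ?mem_enum; last first.
  by move=> y; rewrite /event_on /= => /negbTE ->.
by rewrite /event_on /= eqxx !inE; case: (G i.+1 v x); case: (G i v x).
Qed.

Lemma latest_relays_notified i v w x :
  latest (relay_on w x) (relays (notified i.+1 v)) =
  if G i v w && ~~ G i.+1 v w then Some false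
  else latest (relay_on w x) (relays (state i v)).
Proof.
rewrite notifiedE /= latest_cat latest_map.
rewrite (@latest_single _ _ _ w) ?mem_enum ?inE; last first.
  by move=> y; rewrite /relay_on /= => /negbTE ->.
by rewrite andbC; case: (_ && _); rewrite /relay_on /= ?eqxx.
Qed.

Lemma nbrs_flushed_notified i v : nbrs_flushed (notified i.+1 v) = nbrs_flushed (state i v).
Proof. by rewrite notifiedE. Qed.

Lemma known2_notified i v u : known2 (notified i.+1 v) u =
  if G i.+1 v u && ~~ G i v u then fun _ => false else known2 (state i v) u.
Proof. by rewrite notifiedE /= inE. Qed.

Lemma known3_notified i v u : known3 (notified i.+1 v) u =
  if G i.+1 v u && ~~ G i v u then fun _ _ => false else known3 (state i v) u.
Proof. by rewrite notifiedE /= inE. Qed.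

Lemma latest_relays_state i v w x :
  latest (relay_on w x) (relays (state i.+1 v)) =
  if (if G i.+1 w v then obind (event_on x) (ohead (events (notified i.+1 w))) else None)
    is Some b then Some b
  else latest (relay_on w x) (behead (relays (notified i.+1 v))).
Proof.
rewrite state_succ /= latest_cat latest_pmap (@latest_single _ _ _ w) ?mem_enum /relayed /=.
  case: (G i.+1 w v) => //=; rewrite decode_send /msg_event /=.
  by case: (ohead _) => //= e; rewrite /relay_on /= eqxx.
move=> u /negbTE uw; case: (G i.+1 u v) => //=; rewrite decode_send /msg_event /=.
by case: (ohead _) => //= e; rewrite /relay_on /= uw.
Qed.

Lemma size_relays_state i v :
  size (relays (state i.+1 v)) <=
  (size (relays (notified i.+1 v))).-1 + #|[set w | events (notified i.+1 w) != [::]]|.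
Proof.
rewrite state_succ /= size_cat size_behead leq_add2l size_pmap cardE /enum_mem.
rewrite count_filter size_filter; apply: sub_count => w; rewrite /= inE /relayed.
by case: (G i.+1 w v) => //=; rewrite decode_send /msg_event /= inE andbT; case: (events _).
Qed.

Lemma known2_state i v u w : known2 (state i.+1 v) u w =
  if G i.+1 u v then
    odflt (known2 (notified i.+1 v) u w)
          (obind (event_on w) (ohead (events (notified i.+1 u))))
  else known2 (notified i.+1 v) u w.
Proof. by rewrite state_succ /=; case: (G i.+1 u v); rewrite //= decode_send. Qed.

Lemma known3_state i v u w x : known3 (state i.+1 v) u w x =
  if G i.+1 u v then
    odflt (known3 (notified i.+1 v) u w x)
          (obind (relay_on w x) (ohead (relays (notified i.+1 u))))
  else known3 (notified i.+1 v) u w x.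
Proof. by rewrite state_succ /=; case: (G i.+1 u v); rewrite //= decode_send. Qed.

Lemma nbrs_flushed_state i v : nbrs_flushed (state i.+1 v) =
  [forall u, G i.+1 u v ==> (size (events (notified i.+1 u)) <= 1)].
Proof.
rewrite state_succ /=; apply: eq_forallb => u.
by case: (G i.+1 u v); rewrite //= decode_send.
Qed.

Lemma consistent_state i v : consistent (state i.+1 v) =
  ~~ changed (notified i.+1 v) && [forall u, G i.+1 u v ==> calm (notified i.+1 u)].
Proof.
rewrite state_succ /=; congr (_ && _); apply: eq_forallb => u.
by case: (G i.+1 u v); rewrite //= decode_send.
Qed.

End Execution.

Section Invariants.
Variables (n : nat) (G : dgraph n).
Hypothesis HG : valid_dgraph G.

Local Notation state := (state G).
Local Notation notified := (notified G).
Local Notation ins_time := (ins_time G).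

Lemma ins_time_le i u w : ins_time i u w <= i.
Proof. by apply/bigmax_leqP => j _; rewrite -ltnS. Qed.

Lemma ins_time_succ i u w : ins_time i.+1 u w =
  if G i.+1 u w && ~~ G i u w then i.+1 else ins_time i u w.
Proof.
rewrite /ins_time big_mkcond big_ord_recr /= -big_mkcond -/(ins_time i u w).
by case: ifP => _; [apply/maxn_idPr/(leq_trans (ins_time_le i u w)) | rewrite maxn0].
Qed.

Lemma ins_time_inserted i u w : G i.+1 u w -> ~~ G i u w -> ins_time i.+1 u w = i.+1.
Proof. by move=> new old; rewrite ins_time_succ new old. Qed.

Lemma ins_time_kept i u w : G i.+1 u w = G i u w -> ins_time i.+1 u w = ins_time i u w.
Proof. by move=> kept; rewrite ins_time_succ kept andbN. Qed.

Lemma ins_time_present i u w : G i u w -> ins_time i.+1 u w = ins_time i u w.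
Proof. by move=> old; rewrite ins_time_succ old andbF. Qed.

Definition pending_event i u x := latest (event_on x) (events (state i u)).
Definition pending_relay i u w x := latest (relay_on w x) (relays (state i u)).

Definition view2 i v u w := odflt (known2 (state i v) u w) (pending_event i u w).

Definition view3 i v u w x :=
  odflt (odflt (known3 (state i v) u w x) (pending_relay i u w x)) (pending_event i w x).

Definition events_sound i :=
  forall u x b, pending_event i u x = Some b -> b = G i u x.

Definition view2_correct i := forall v u, G i v u -> forall w,
  (view2 i v u w -> G i u w) /\
  (G i u w -> ins_time i v u <= ins_time i u w -> view2 i v u w).

Definition relays_nonnbr i :=
  forall u w, ~~ G i u w -> forall x, pending_relay i u w x != Some true.

Definition relays_sound i := forall u w, G i u w -> forall x,
  pending_event i w x = None -> pending_relay i u w x = Some true -> G i w x.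

Definition view3_nonnbr i := forall v u, G i v u -> forall w, ~~ G i u w -> forall x,
  odflt (known3 (state i v) u w x) (pending_relay i u w x) = false.

Definition view3_correct i := forall v u, G i v u -> forall w, G i u w -> forall x,
  (view3 i v u w x -> G i w x) /\
  (G i w x -> ins_time i u w <= ins_time i w x -> ins_time i v u <= ins_time i w x ->
   view3 i v u w x).

Lemma events_sound_notified i : events_sound i ->
  forall u x b, latest (event_on x) (events (notified i.+1 u)) = Some b -> b = G i.+1 u x.
Proof.
move=> sound u x b; rewrite latest_events_notified.
by case: ifP => [_ [] //|/negbFE/eqP kept /sound]; rewrite kept.
Qed.

Lemma events_sound_invariant i : events_sound i.
Proof.
elim: i => [|i IH] u x b; first by rewrite /pending_event state0.
rewrite /pending_event events_state => pending.
exact: events_sound_notified IH _ _ _ (latest_behead_Some pending).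
Qed.

Lemma view2_correct_invariant i : view2_correct i.
Proof.
elim: i => [|i IH] v u vu w; first by case: HG vu => ->.
have uv : G i.+1 u v by rewrite (G_sym HG).
rewrite /view2 /pending_event events_state known2_state uv odflt_latest_behead.
rewrite known2_notified latest_events_notified vu.
case: (boolP (G i.+1 u w != G i u w)) => [_ /=|/negbNE/eqP uw_kept].
  by split => // ->.
rewrite (ins_time_kept uw_kept) uw_kept.
case: (boolP (G i v u)) => vu_old /=.
  by rewrite ins_time_present //; apply: IH.
(* {v,u} is new: the cache was reset, and every unchanged {u,w} is older than {v,u}. *)
rewrite ins_time_inserted //; split.
  by case E: (latest _ _) => [b|] //= b_true; rewrite -(events_sound_invariant E) b_true.
by move=> _; rewrite ltnNge (leq_trans (ins_time_le i u w)).
Qed.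

Lemma relays_nonnbr_invariant i : relays_nonnbr i.
Proof.
elim: i => [|i IH] u w uw x; first by rewrite /pending_relay state0.
rewrite /pending_relay latest_relays_state (G_sym HG i.+1 w u) (negbTE uw).
apply/eqP => /= relay_new; move: (latest_behead_Some relay_new).
rewrite latest_relays_notified (negbTE uw) andbT.
case: (boolP (G i u w)) => [//|uw_old relay_old].
by move: (IH u w uw_old x); rewrite /pending_relay relay_old.
Qed.

Lemma relays_sound_invariant i : relays_sound i.
Proof.
elim: i => [|i IH] u w uw x; first by case: HG uw => ->.
rewrite /pending_event /pending_relay events_state.
rewrite latest_relays_state (G_sym HG i.+1 w u) uw => no_event.
have := latest_behead (event_on x) (events (notified i.+1 w)); rewrite no_event.
case: (obind _ _) => [b|] /= whole.
  case=> b_true.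
  by rewrite (events_sound_notified (@events_sound_invariant i) whole) in b_true.
move=> relay_new; move: (latest_behead_Some relay_new).
rewrite latest_relays_notified uw andbF => relay_old.
move: whole; rewrite latest_events_notified; case: ifP => // /negbFE/eqP -> event_old.
case: (boolP (G i u w)) => uw_old; first exact: IH uw_old x event_old relay_old.
by move: (relays_nonnbr_invariant uw_old x); rewrite /pending_relay relay_old.
Qed.

Lemma view3_nonnbr_invariant i : view3_nonnbr i.
Proof.
elim: i => [|i IH] v u vu w uw x; first by case: HG vu => ->.
have uv : G i.+1 u v by rewrite (G_sym HG).
rewrite /pending_relay latest_relays_state (G_sym HG i.+1 w u) (negbTE uw) /=.
rewrite known3_state uv odflt_latest_behead latest_relays_notified known3_notified.
rewrite (negbTE uw) andbT vu.
case: (boolP (G i u w)) => [//|uw_old].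
case: (boolP (G i v u)) => vu_old /=; first exact: IH.
move: (relays_nonnbr_invariant uw_old x).
by rewrite /pending_relay; case: (latest _ _) => [[]|].
Qed.

Lemma view3_correct_invariant i : view3_correct i.
Proof.
elim: i => [|i IH] v u vu w uw x; first by case: HG vu => ->.
have uv : G i.+1 u v by rewrite (G_sym HG).
rewrite /view3 /pending_relay /pending_event latest_relays_state (G_sym HG i.+1 w u) uw.
rewrite odflt_orelse events_state odflt_latest_behead known3_state uv.
rewrite odflt_latest_behead latest_relays_notified uw andbF known3_notified vu.
rewrite latest_events_notified.
case: (boolP (G i.+1 w x != G i w x)) => [_ /=|/negbNE/eqP wx_kept].
  by split => // ->.
rewrite (ins_time_kept wx_kept) wx_kept.
case: (boolP (G i v u)) => vu_old /=.
  case: (boolP (G i u w)) => uw_old.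
    by rewrite !ins_time_present //; apply: IH.
  rewrite (view3_nonnbr_invariant vu_old uw_old x) (ins_time_inserted uw uw_old); split.
    by case E: (latest _ _) => [b|] //= b_true; rewrite -(events_sound_invariant E) b_true.
  by move=> _; rewrite ltnNge (leq_trans (ins_time_le i w x)).
rewrite (ins_time_inserted vu vu_old); split; last first.
  by move=> _ _; rewrite ltnNge (leq_trans (ins_time_le i w x)).
case E: (latest _ (events _)) => [b|] /=.
  by move=> b_true; rewrite -(events_sound_invariant E) b_true.
case E2: (latest _ (relays _)) => [b|] //= b_true; rewrite b_true in E2.
case: (boolP (G i u w)) => uw_old; first exact: relays_sound_invariant uw_old x E E2.
by move: (relays_nonnbr_invariant uw_old x); rewrite /pending_relay E2.
Qed.

End Invariants.

Lemma pair_eqP n (a b u w : 'I_n) :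
  reflect (a = u /\ b = w \/ a = w /\ b = u) (Defs.pair_eq a b u w).
Proof.
by apply: (iffP orP) => [[]/andP[/eqP-> /eqP->]|[[-> ->]|[-> ->]]]; rewrite ?eqxx; auto.
Qed.

Section Answers.
Variables (n : nat) (G : dgraph n).
Hypothesis HG : valid_dgraph G.

Local Notation state := (state G).
Local Notation notified := (notified G).

Lemma unchanged_nbr i v : ~~ changed (notified i.+1 v) -> forall x, G i.+1 v x = G i v x.
Proof.
rewrite changed_notified negbK => /eqP no_toggle x.
by apply/eqP/negPn; move: (in_set0 x); rewrite -no_toggle inE => ->.
Qed.

Lemma nbrs_flushed_events i u : nbrs_flushed (state i u) ->
  forall w, G i w u -> events (state i w) = [::].
Proof.
case: i => [|i]; first by move=> _ w; rewrite state0.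
rewrite nbrs_flushed_state => /forallP flushed w wu; move: (flushed w).
by rewrite wu events_state; case: (events _) => [|? []].
Qed.

Section ConsistentRound.
Variables (i : nat) (v : 'I_n).
Hypothesis consistent_v : consistent (state i.+1 v).

Lemma unchanged_v : ~~ changed (notified i.+1 v).
Proof. by move: consistent_v; rewrite consistent_state => /andP []. Qed.

Lemma calm_nbr u : G i.+1 u v -> calm (notified i.+1 u).
Proof.
move: consistent_v; rewrite consistent_state => /andP [_ /forallP calm_all].
exact: (implyP (calm_all u)).
Qed.

Lemma nbr_consistent x : nbr (state i.+1 v) x = G i v x.
Proof. by rewrite nbr_state // (unchanged_nbr unchanged_v). Qed.

Lemma known2_consistent u w : G i v u -> known2 (state i.+1 v) u w = view2 G i v u w.
Proof.
move=> vu; have vu' : G i.+1 v u by rewrite (unchanged_nbr unchanged_v).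
have uv : G i.+1 u v by rewrite (G_sym HG).
case/and4P: (calm_nbr uv) => unchanged_u small _ _.
rewrite known2_state uv known2_notified vu vu' /= -latest_small //.
by rewrite latest_events_notified (unchanged_nbr unchanged_u) eqxx.
Qed.

Lemma known3_consistent u w x : G i v u ->
  known3 (state i.+1 v) u w x = odflt (known3 (state i v) u w x) (pending_relay G i u w x).
Proof.
move=> vu; have vu' : G i.+1 v u by rewrite (unchanged_nbr unchanged_v).
have uv : G i.+1 u v by rewrite (G_sym HG).
case/and4P: (calm_nbr uv) => unchanged_u _ small _.
rewrite known3_state uv known3_notified vu vu' /= -latest_small //.
by rewrite latest_relays_notified (unchanged_nbr unchanged_u) andbN.
Qed.

Lemma events_flushed u w : G i v u -> G i u w -> events (state i w) = [::].
Proof.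
move=> vu uw; have uv : G i.+1 u v by rewrite (G_sym HG) (unchanged_nbr unchanged_v).
case/and4P: (calm_nbr uv) => _ _ _; rewrite nbrs_flushed_notified => flushed.
by apply: nbrs_flushed_events flushed _ _; rewrite (G_sym HG).
Qed.

Lemma known3_view3 u w x :
  G i v u -> G i u w -> known3 (state i.+1 v) u w x = view3 G i v u w x.
Proof.
by move=> vu uw; rewrite known3_consistent // /view3 /pending_event (events_flushed vu uw).
Qed.

Lemma known2_sound u w : G i v u -> known2 (state i.+1 v) u w -> G i u w.
Proof.
by move=> vu; rewrite known2_consistent //; apply: (view2_correct_invariant HG vu w).1.
Qed.

Lemma known3_sound u w x :
  G i v u -> known3 (state i.+1 v) u w x -> G i u w && G i w x.
Proof.
move=> vu; case: (boolP (G i u w)) => uw /=.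
  by rewrite known3_view3 //; apply: (view3_correct_invariant HG vu uw x).1.
by rewrite known3_consistent // (view3_nonnbr_invariant HG vu uw x).
Qed.

Lemma answer_complete a b : in_R3 G i v a b -> answer v (state i.+1 v) a b.
Proof.
case/andP => ab /or3P [/orP [/eqP a_v | /eqP b_v] | /existsP [u /existsP [w]] |
                      /existsP [u /existsP [w /existsP [x]]]].
- by rewrite /answer a_v eqxx nbr_consistent -a_v ab.
- by rewrite /answer b_v eqxx !nbr_consistent (G_sym HG i v a) -b_v ab orbT.
- case/and4P => vu uw /pair_eqP ab_uw robust.
  have known : known2 (state i.+1 v) u w.
    by rewrite known2_consistent //; apply: (view2_correct_invariant HG vu w).2.
  apply/or4P/Or43/existsP; exists u; rewrite nbr_consistent vu /=.
  by case: ab_uw => -[-> ->]; rewrite eqxx known ?orbT.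
- case/and5P => vu uw wx /pair_eqP ab_wx /andP [robust_uw robust_vu].
  have known : known3 (state i.+1 v) u w x.
    by rewrite known3_view3 //; apply: (view3_correct_invariant HG vu uw x).2.
  apply/or4P/Or44/existsP; exists u; rewrite nbr_consistent vu /=.
  by case: ab_wx => -[-> ->]; rewrite known ?orbT.
Qed.

Lemma answer_sound a b : answer v (state i.+1 v) a b -> in_E3 G i v a b.
Proof.
rewrite /answer /in_E3 !nbr_consistent.
case/or4P => [/andP [/eqP-> vb] | /andP [/eqP-> va] | /existsP [u] | /existsP [u]].
- by rewrite vb /=; apply/existsP; exists v; rewrite eqxx.
- by rewrite (G_sym HG) va /=; apply/existsP; exists v; rewrite eqxx orbT.
- rewrite nbr_consistent => /andP [vu /orP [] /andP [/eqP-> /(known2_sound vu) uw]].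
    by rewrite uw /=; apply/existsP; exists u; rewrite eqxx vu orbT.
  by rewrite (G_sym HG) uw /=; apply/existsP; exists u; rewrite eqxx vu !orbT.
- rewrite nbr_consistent => /andP [vu /orP [] /(known3_sound vu) /andP [uw wx]].
    by rewrite wx /=; apply/existsP; exists a; rewrite eqxx /=;
       apply/or3P/Or33/existsP; exists u; rewrite vu uw.
  by rewrite (G_sym HG) wx /=; apply/existsP; exists b; rewrite eqxx orbT /=;
     apply/or3P/Or33/existsP; exists u; rewrite vu uw.
Qed.

End ConsistentRound.

Lemma listing_answers_correct : answers_correct (listing_alg n) G.
Proof.
move=> i v f; rewrite /= /output -/(state i.+1 v).
case: ifP => // consistent_v [<-] a b; split.
  exact: answer_complete.
exact/contra/answer_sound.
Qed.

End Answers.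

Section Amortization.
Variables (n : nat) (G : dgraph n).
Hypothesis HG : valid_dgraph G.

Local Notation state := (state G).
Local Notation notified := (notified G).
Local Notation toggled := (toggled G).

Lemma sum_card_toggled j : \sum_v #|toggled j v| = 2 * num_changes G j.
Proof.
case: HG => _ [G_sym G_irr].
apply: (handshake (r := fun v x => G j v x != G j.-1 v x)) => [v x | v] /=.
  by rewrite G_sym (G_sym j.-1).
by rewrite !G_irr.
Qed.

Lemma card_toggled_le j v : #|toggled j v| <= 2 * num_changes G j.
Proof. by rewrite -sum_card_toggled (bigD1 v) //= leq_addr. Qed.

Lemma toggled_num_changes j v : toggled j v != set0 -> 0 < num_changes G j.
Proof.
rewrite -card_gt0 => /leq_trans/(_ (card_toggled_le j v)).
by rewrite muln_gt0.
Qed.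

(* In a round without changes, each of the [N] nodes with queued events pops
   one of them, while every relay queue pops one entry and receives at most [N]:
   the potential drops by at least [N + 1] unless all relay queues are empty. *)
Definition potential i :=
  2 * \sum_w size (events (state i w)) + \max_w size (relays (state i w)).

Definition backlogged i :=
  [exists w, (1 < size (events (notified i w))) || (1 < size (relays (notified i w)))].

Lemma backlogged0 : backlogged 0 = false.
Proof.
have no_toggle w : toggled 0 w = set0 by apply/setP => x; rewrite !inE eqxx.
apply/existsP => -[w]; have := size_relays_notified G 0 w.
by rewrite size_events_notified no_toggle cards0 /= state0 /=; case: (size _).
Qed.

Lemma potential_step i :
  potential i.+1 + backlogged i.+1 <= potential i + 6 * num_changes G i.+1.
Proof.
rewrite /potential.
set E := \sum_w size (events (state i w)); set R := \max_w size (relays (state i w)).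
set E1 := \sum_w size (events (state i.+1 w)).
set R1 := \max_w size (relays (state i.+1 w)).
set E' := \sum_w size (events (notified i.+1 w)).
set R' := \max_w size (relays (notified i.+1 w)).
set N := #|[set w | events (notified i.+1 w) != [::]]|.
have E'_eq : E' = E + 2 * num_changes G i.+1.
  rewrite -sum_card_toggled -big_split; apply: eq_bigr => w _.
  exact: size_events_notified.
have R'_le : R' <= R + 2 * num_changes G i.+1.
  apply/bigmax_leqP => w _; apply: leq_trans (size_relays_notified G i.+1 w) _.
  rewrite leq_add ?card_toggled_le //.
  exact: (@leq_bigmax _ (fun w => size (relays (state i w))) w).
have E1_eq : E1 + N = E'.
  rewrite /E1 /N card_set_sum -big_split; apply: eq_bigr => w _.
  by rewrite events_state size_behead; case: (events _) => //= *; rewrite addn1.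
have R1_le : R1 <= R' - 1 + N.
  apply/bigmax_leqP => w _; apply: leq_trans (size_relays_state G i w) _.
  rewrite leq_add2r -!subn1 leq_sub2r //.
  exact: (@leq_bigmax _ (fun w => size (relays (notified i.+1 w))) w).
have backlog : backlogged i.+1 -> (0 < N) || (0 < R').
  case/existsP => w /orP [long|long]; apply/orP; [left | right].
    by rewrite card_gt0; apply/set0Pn; exists w; rewrite inE; case: (events _) long.
  exact: leq_trans (ltnW long) (@leq_bigmax _ (fun w => size (relays (notified i.+1 w))) w).
case: (backlogged i.+1) backlog => [/(_ isT) /orP [] pos|_] /=; lia.
Qed.

Lemma backlogged_unflushed i u : ~~ nbrs_flushed (state i u) -> backlogged i.
Proof.
case: i => [|i]; first by rewrite state0.
rewrite nbrs_flushed_state negb_forall => /existsP [w].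
by rewrite negb_imply -ltnNge => /andP [_ long]; apply/existsP; exists w; rewrite long.
Qed.

Lemma inconsistent_step i : inconsistent_at (listing_alg n) G i.+1 <=
  (0 < num_changes G i.+1) + backlogged i.+1 + backlogged i.
Proof.
case: (boolP (inconsistent_at _ _ _)) => // /existsP [v].
rewrite /= /output -/(state i.+1 v) consistent_state.
case: ifP => // /negbT; rewrite negb_and negbK => /orP [changed_v _|].
  by rewrite changed_notified in changed_v; rewrite (toggled_num_changes changed_v).
rewrite negb_forall => /existsP [u]; rewrite negb_imply /calm => /andP [_ not_calm] _.
have [changed_u|unchanged_u] := boolP (changed (notified i.+1 u)).
  by rewrite changed_notified in changed_u; rewrite (toggled_num_changes changed_u).
have [long|short1] := ltnP 1 (size (events (notified i.+1 u))).
  suff -> : backlogged i.+1 by rewrite addn1.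
  by apply/existsP; exists u; rewrite long.
have [long|short2] := ltnP 1 (size (relays (notified i.+1 u))).
  suff -> : backlogged i.+1 by rewrite addn1.
  by apply/existsP; exists u; rewrite long orbT.
rewrite unchanged_u short1 short2 nbrs_flushed_notified /= in not_calm.
by rewrite (backlogged_unflushed not_calm) addn1.
Qed.

Lemma inconsistent_rounds_bound i : inconsistent_rounds (listing_alg n) G i +
  2 * potential i + backlogged i <= 13 * total_changes G i.
Proof.
elim: i => [|i IH].
  rewrite /inconsistent_rounds /total_changes !big_geq // backlogged0 /potential.
  by rewrite !big1 // => w _; rewrite state0.
have sum_recr (F : nat -> nat) :
  \sum_(1 <= j < i.+2) F j = \sum_(1 <= j < i.+1) F j + F i.+1 by rewrite big_nat_recr.
move: IH; rewrite /inconsistent_rounds /total_changes !sum_recr.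
have := inconsistent_step i; have := potential_step i.
have : (0 < num_changes G i.+1) <= num_changes G i.+1 by case: (num_changes _ _).
lia.
Qed.

End Amortization.

Theorem theorem8 :
  exists c C : nat, forall n : nat, exists A : dds_alg n,
    forall G : dgraph n, valid_dgraph G ->
      [/\ msg_bounded A G C,
          answers_correct A G &
          forall i : nat, (inconsistent_rounds A G i <= c * total_changes G i)%N].
Proof.
exists 13, 7 => n; exists (listing_alg n) => G HG; split.
- by move=> i u v _; apply/eq_leq/size_encode.
- exact: listing_answers_correct.
- move=> i; apply: leq_trans _ (inconsistent_rounds_bound HG i).
  by rewrite -addnA leq_addr.
Qed.
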